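(* Let $\mathcal{I}$ be an interval hypergraph on $[n]$, $A$ an acyclic orientation of $\mathcal{I}$, and $i\in[n]$ such that there is $I\in\mathcal{I}$ with $i=A(I)<\max(I)$. Then there exists $j>i$ such that the orientation $B$ obtained from $A$ by flipping $i$ to $j$ (i.e. $B(H)=j$ if $A(H)=i$ and $j\in H$, and $B(H)=A(H)$ otherwise) is acyclic. Symmetrically, if there is $I\in\mathcal{I}$ with $i=A(I)>\min(I)$, there exists $j<i$ such that the orientation obtained from $A$ by flipping $i$ to $j$ (defined by the same formula) is acyclic.
   Context: An interval hypergraph $\mathcal{I}$ on $[n]$ is a collection of intervals of $[n]$ containing all singletons. An orientation is a map $O:\mathcal{I}\to[n]$ with $O(I)\in I$; it is acyclic if there are no $H_1,\dots,H_k$, $k\ge2$, with $O(H_{i+1})\in H_i\setminus\{O(H_i)\}$ for $i\in[k-1]$ and $O(H_1)\in H_k\setminus\{O(H_k)\}$. *)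

From mathcomp Require Import all_boot all_order.
Set Implicit Arguments. Unset Strict Implicit. Unset Printing Implicit Defensive.

(* Ground set [n] is represented by 'I_n = {0,..,n-1} (a shift of {1..n}).
   An interval is a pair (a,b) with a <= b, denoting {a,...,b}. *)
Definition interval (n : nat) := ('I_n * 'I_n)%type.

Definition in_ival n (x : 'I_n) (I : interval n) : bool := (I.1 <= x <= I.2)%N.

Definition interval_hypergraph n (H : {set interval n}) : Prop :=
  (forall I, I \in H -> (I.1 <= I.2)%N) /\ (forall x : 'I_n, (x, x) \in H).

Definition orientation n (H : {set interval n}) (O : interval n -> 'I_n) : Prop :=
  forall I, I \in H -> in_ival (O I) I.

Definition in_minus n (O : interval n -> 'I_n) (x : 'I_n) (I : interval n) :=
  in_ival x I && (x != O I).

Definition acyclic n (H : {set interval n}) (O : interval n -> 'I_n) : Prop :=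
  ~ exists (k : nat) (h : nat -> interval n),
      [/\ (2 <= k)%N,
          (forall i, (i < k)%N -> h i \in H),
          (forall i, (i.+1 < k)%N -> in_minus O (O (h i.+1)) (h i))
        & in_minus O (O (h 0)) (h k.-1)].

Definition flip n (A : interval n -> 'I_n) (i j : 'I_n) : interval n -> 'I_n :=
  fun I => if (A I == i) && in_ival j I then j else A I.

From mathcomp Require Import all_boot all_order zify.
Set Implicit Arguments. Unset Strict Implicit. Unset Printing Implicit Defensive.

(* An orientation O is read as the digraph on [n] with an arc u -> v whenever
   some hyperedge J has O(J) = u and v in J \ {u}; O is acyclic iff this
   digraph has no cycle.  Flipping i to j turns the arcs out of i coming from
   hyperedges that contain j into arcs out of j, so the flip stays acyclic as
   long as no w <> j with an arc i -> w reaches j.  Choose j minimal for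
   reachability among the vertices w > i with an arc i -> w.  Such a w cannot
   reach j by minimality, and neither can a w < i: every arc stays inside an
   interval containing its tail, so an arc jumping over i may be replaced by an
   arc to i, and a path from w to j would give a cycle i -> w -> ... -> i. *)

Local Open Scope nat_scope.

Section CycleFree.
Variables (T : finType) (e : rel T).

Definition cycle_free := forall x y, e x y -> ~ connect e y x.

Hypothesis e_cycle_free : cycle_free.

Lemma cycle_free_connect_antisym x y : connect e x y -> connect e y x -> x = y.
Proof.
move=> /connectP[[|z p] /= xp ->] // yx.
case/andP: xp => exz zp; case: (e_cycle_free exz).
by apply: connect_trans yx; apply/connectP; exists p.
Qed.

Lemma cycle_free_minimal (V : pred T) v0 :
  V v0 -> exists2 j, V j & forall v, V v -> connect e v j -> v = j.
Proof.
move=> Vv0; pose ancestors x := [set y | connect e y x].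
have [j Vj minj] := arg_minnP (fun x => #|ancestors x|) Vv0.
exists j => // v Vv vj; apply: (cycle_free_connect_antisym vj).
apply: contraT => jv.
have : ancestors v \proper ancestors j.
  rewrite properE; apply/andP; split.
    by apply/subsetP => y; rewrite !inE => /connect_trans; apply.
  by apply/subsetPn; exists j; rewrite !inE ?connect0.
by move/proper_card; rewrite ltnNge minj.
Qed.

End CycleFree.

Section ArcsFromSource.
Variables (T : finType) (e f : rel T) (s : T) (W : pred T).
Hypothesis f_arc : forall x y, f x y -> e x y \/ x = s /\ W y.

Lemma connect_to_source x : connect f x s -> connect e x s.
Proof.
move=> /connectP[p]; elim: p x => [|y p IHp] x /= => [_ -> | /andP[fxy yp] ps].
  exact: connect0.
have [exy | [-> _]] := f_arc fxy; last exact: connect0.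
exact: connect_trans (connect1 exy) (IHp y yp ps).
Qed.

Lemma connect_split_at_source a b : connect f a b ->
  connect e a b \/ connect f a s /\ exists2 w, W w & connect f w b.
Proof.
move=> /connectP[p]; elim: p a => [|y p IHp] a /= => [_ -> | /andP[fay yp] pb].
  by left; exact: connect0.
have [eay | [-> Wy]] := f_arc fay.
  case: (IHp y yp pb) => [eyb | [ys wb]].
    by left; exact: connect_trans (connect1 eay) eyb.
  by right; split=> //; exact: connect_trans (connect1 fay) ys.
right; split; first exact: connect0.
by exists y => //; apply/connectP; exists p.
Qed.

Lemma cycle_free_add_arcs_from :
  cycle_free e -> (forall w, W w -> ~ connect f w s) -> cycle_free f.
Proof.
move=> e_cf W_s x y fxy yx.
have [exy | [xs Wy]] := f_arc fxy; last by apply: (W_s y Wy); rewrite -xs.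
have [eyx | [ys [w Ww wx]]] := connect_split_at_source yx; first exact: e_cf exy eyx.
by apply: (W_s w Ww); exact: connect_trans wx (connect_trans (connect1 fxy) ys).
Qed.

End ArcsFromSource.

Definition separates (i x y : nat) := (x < i < y) || (y < i < x).

Section Arcs.
Variables (n : nat) (H : {set interval n}) (O : interval n -> 'I_n).

Definition arc : rel 'I_n :=
  fun u v => [exists J in H, (O J == u) && in_minus O v J].

Lemma arcP u v :
  reflect (exists2 J, J \in H & O J = u /\ in_minus O v J) (arc u v).
Proof.
apply: (iffP exists_inP) => [[J JH /andP[/eqP Ju M]] | [J JH [Ju M]]].
  by exists J.
by exists J; rewrite // Ju eqxx.
Qed.

Lemma edge_arc J v : J \in H -> in_ival v J -> v != O J -> arc (O J) v.
Proof. by move=> JH vJ vO; apply/arcP; exists J => //; rewrite /in_minus vJ vO. Qed.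

Lemma arc_neq u v : arc u v -> u != v.
Proof. by case/arcP=> J _ [<- /andP[_]]; rewrite eq_sym. Qed.

Lemma acyclic_cycle_free : acyclic H O -> cycle_free arc.
Proof.
move=> acO u v uv /connectP[p vp pu].
have k2 : 1 < (size p).+1.
  by have := arc_neq uv; case: p {vp} pu => [/= -> | //]; rewrite eqxx.
set s := u :: v :: p; set k := (size p).+1.
have s_arc m : m < k -> arc (nth u s m) (nth u s m.+1).
  by move=> mk; have /(pathP u)/(_ m mk) : path arc u (v :: p) by rewrite /= uv.
have sk : nth u s k = u.
  by rewrite /s /k /= -[size p]/((size (v :: p)).-1) nth_last /= pu.
pose h m := odflt (u, u)
  [pick J in H | (O J == nth u s m) && in_minus O (nth u s m.+1) J].
have hP m : m < k ->
    [/\ h m \in H, O (h m) = nth u s m & in_minus O (nth u s m.+1) (h m)].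
  move=> /s_arc; rewrite /h; case: pickP => [J /andP[JH /andP[/eqP-> ->]] // | none].
  by case/arcP=> J JH [Ju M]; move: (none J); rewrite JH Ju eqxx M.
apply: acO; exists k, h; split => //.
- by move=> m /hP[].
- move=> m mk; have [_ -> _] := hP _ mk.
  by have [_ _ M] := hP _ (ltnW mk).
- have [_ -> _] := hP 0 (ltnW k2).
  by have [_ _] := hP k.-1 (leqnn k); rewrite sk.
Qed.

Lemma cycle_free_acyclic : cycle_free arc -> acyclic H O.
Proof.
move=> cf [k [h [k2 hH h_arc h_last]]].
have step m : m.+1 < k -> arc (O (h m)) (O (h m.+1)).
  by move=> mk; apply/arcP; exists (h m); [apply: hH; exact: ltnW | split=> //; exact: h_arc].
have back : arc (O (h k.-1)) (O (h 0)).
  by apply/arcP; exists (h k.-1); [apply: hH; lia | split].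
have chain d m : m + d = k.-1 -> connect arc (O (h m)) (O (h k.-1)).
  elim: d m => [|d IHd] m; first by rewrite addn0 => ->; exact: connect0.
  by move=> md; apply: connect_trans (connect1 (step m _)) (IHd m.+1 _); lia.
apply: (cf _ _ (step 0 k2)).
by apply: connect_trans (chain k.-2 1 _) (connect1 back); lia.
Qed.

Hypothesis O_orientation : orientation H O.

Lemma arc_separated (i : 'I_n) x y : arc x y -> separates i x y -> arc x i.
Proof.
move=> /arcP[J JH [Jx /andP[yJ _]]] sep; apply/arcP; exists J => //; split=> //.
have := O_orientation JH; rewrite /in_minus Jx.
by move: yJ sep; rewrite /in_ival /separates -val_eqE /=; lia.
Qed.

Lemma connect_separated (i : 'I_n) x y :
  connect arc x y -> separates i x y -> connect arc x i.
Proof.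
move=> /connectP[p]; elim: p x => [|z p IHp] x /= => [_ -> | /andP[xz zp] py] sep.
  by move: sep; rewrite /separates; lia.
have [<- | zi] := eqVneq z i; first exact: connect1.
have [zy | nzy] := boolP (separates i z y).
  exact: connect_trans (connect1 xz) (IHp z zp py zy).
apply/connect1/(arc_separated xz).
by move: sep nzy zi; rewrite /separates -val_eqE /=; lia.
Qed.

End Arcs.

Section Flip.
Variables (n : nat) (H : {set interval n}) (A : interval n -> 'I_n) (i j : 'I_n).

Lemma arc_flip x z : arc H (flip A i j) x z ->
  x = j /\ (z == i) || arc H A i z && (z != j) \/
  arc H A x z /\ (x = i -> z != j).
Proof.
case/arcP=> J JH []; rewrite /flip /in_minus.
case: ifP => [/andP[/eqP AJ jJ] <- /andP[zJ zj] | noflip Ax /andP[zJ zx]].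
  left; split=> //; case: eqVneq => //= zi; rewrite zj andbT.
  by rewrite -AJ edge_arc // AJ.
right; split; first by rewrite -Ax edge_arc.
by move=> xi; apply: contraFneq noflip => zj; rewrite Ax xi eqxx -zj zJ.
Qed.

Hypothesis neq_ij : i != j.

Lemma flip_acyclic : acyclic H A ->
    (forall w, arc H A i w -> w != j -> ~ connect (arc H A) w j) ->
  acyclic H (flip A i j).
Proof.
move=> /acyclic_cycle_free acA K; apply: cycle_free_acyclic.
have B_arc x z : arc H (flip A i j) x z ->
    arc H A x z \/ x = j /\ (z == i) || arc H A i z && (z != j).
  by case/arc_flip => [|[]]; [right | left].
apply: (cycle_free_add_arcs_from B_arc acA) => w /orP[/eqP-> | /andP[iw wj]].
  move=> /connectP[[|z p] /=]; first by move=> _ ji; have := neq_ij; rewrite ji eqxx.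
  case/andP=> /arc_flip[[ij _] | [iz /(_ erefl) zj]] zp pj.
    by have := neq_ij; rewrite ij eqxx.
  by apply: (K z iz zj); apply: (connect_to_source B_arc); apply/connectP; exists p.
by move=> /(connect_to_source B_arc); apply: K.
Qed.

End Flip.

Lemma exists_acyclic_flip n (H : {set interval n}) A (i : 'I_n) (P : pred 'I_n) :
    orientation H A -> acyclic H A -> ~~ P i ->
    (forall w j, P j -> ~~ P w -> w != i -> separates i w j) ->
    (exists2 x, P x & arc H A i x) ->
  exists2 j, P j & acyclic H (flip A i j).
Proof.
move=> OA acA Pi sepP [x Px ix].
have [|j /andP[Pj ij] minj] :=
  @cycle_free_minimal _ _ (acyclic_cycle_free acA) [pred v | P v && arc H A i v] x.
  by rewrite inE Px.
exists j => //; apply: flip_acyclic => //; first by apply: contraNneq Pi => ->.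
move=> w iw wj wj_conn; have [Pw | nPw] := boolP (P w).
  by move/eqP: wj; apply; apply: (minj w _ wj_conn); rewrite inE Pw iw.
have wi : w != i by rewrite eq_sym (arc_neq iw).
have wi_conn := connect_separated OA wj_conn (sepP w j Pj nPw wi).
exact: acyclic_cycle_free acA _ _ iw wi_conn.
Qed.

Theorem proposition3p16 (n : nat) (H : {set interval n}) (A : interval n -> 'I_n)
  (i : 'I_n) :
  interval_hypergraph H -> orientation H A -> acyclic H A ->
  ((exists2 I, I \in H & (A I = i) /\ (i < I.2)%N) ->
     exists2 j : 'I_n, (i < j)%N & acyclic H (flip A i j)) /\
  ((exists2 I, I \in H & (A I = i) /\ (I.1 < i)%N) ->
     exists2 j : 'I_n, (j < i)%N & acyclic H (flip A i j)).
Proof.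
move=> [H_le _] OA acA.
split=> [[I IH [AI iI]] | [I IH [AI Ii]]].
- apply: (@exists_acyclic_flip _ _ _ _ (fun x => i < x)) => //; first by rewrite ltnn.
    by move=> w j ij; rewrite /separates -val_eqE /=; lia.
  exists I.2 => //; rewrite -AI edge_arc //; first by rewrite /in_ival H_le ?leqnn.
  by rewrite AI -val_eqE (gtn_eqF iI).
- apply: (@exists_acyclic_flip _ _ _ _ (fun x => x < i)) => //; first by rewrite ltnn.
    by move=> w j ji; rewrite /separates -val_eqE /=; lia.
  exists I.1 => //; rewrite -AI edge_arc //; first by rewrite /in_ival H_le ?leqnn.
  by rewrite AI -val_eqE (ltn_eqF Ii).
Qed.
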